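(* Let $N\ge1$, $n=\sum_{\nu=1}^N n_\nu$, $m\ge1$. For $\nu=1,\dots,N$ let $Q_\nu\in\mathbb{R}^{n_\nu\times n_\nu}$ be symmetric positive definite, $c_\nu\in\mathbb{R}^{n_\nu}$, and $X_\nu\subseteq\mathbb{R}^{n_\nu}$ nonempty, convex and closed; let $X=X_1\times\dots\times X_N$. Let $a\in\mathbb{R}^m$, $a\ge0$, $Q_y\in\mathbb{R}^{m\times m}$ positive definite diagonal, and $b,l:\mathbb{R}^n\to\mathbb{R}^m$ differentiable. Define $$\varphi(x)=\sum_{i=1}^m a_i\max\{(Q_y^{-1}b(x))_i,\,l_i(x)\},\qquad \Theta(x)=\sum_{\nu=1}^N\Big[\tfrac12 x_\nu^\top Q_\nu x_\nu+c_\nu^\top x_\nu\Big]+\varphi(x).$$ Assume there exist $\rho\ge0$ and $\omega_1,\omega_2\in\mathbb{R}$ such that for all $x\in X$ with $\|x\|>\rho$, $$\min\{0,\varphi(x)\}\ge\omega_1\|x\|+\omega_2.$$ Then $\Theta$ is coercive on $X$, i.e. $\Theta(x)\to\infty$ as $\|x\|\to\infty$ with $x\in X$.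
   Context: Here $x=(x_1,\dots,x_N)$ with $x_\nu\in\mathbb{R}^{n_\nu}$; the maxima are componentwise. *)

From HB Require Import structures.
From mathcomp Require Import all_boot all_order all_algebra.
From mathcomp Require Import all_classical all_reals all_analysis.
Set Implicit Arguments. Unset Strict Implicit. Unset Printing Implicit Defensive.
Import Order.TTheory GRing.Theory Num.Theory.
Import numFieldNormedType.Exports.
Local Open Scope ring_scope.
Local Open Scope classical_set_scope.

(* Vectors are row vectors 'rV[R]_k; x^T Q x is (x *m Q *m x^T) 0 0. *)

Definition enorm (R : realType) (k : nat) (x : 'rV[R]_k) : R :=
  Num.sqrt (\sum_(i < k) x 0 i ^+ 2).

Definition symmetric_mx (R : realType) (k : nat) (Q : 'M[R]_k) : Prop :=
  Q^T = Q.

Definition posdef_mx (R : realType) (k : nat) (Q : 'M[R]_k) : Prop :=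
  forall v : 'rV[R]_k, v != 0 -> 0 < (v *m Q *m v^T) 0 0.

Definition block (R : realType) (N : nat) (n_ : 'I_N -> nat)
  (x : 'rV[R]_(\sum_(nu < N) n_ nu)) (nu : 'I_N) : 'rV[R]_(n_ nu) :=
  submxrow x nu.

Definition phi_fun (R : realType) (n m : nat) (a : 'rV[R]_m) (Qy : 'M[R]_m)
  (b l : 'rV[R]_n -> 'rV[R]_m) (x : 'rV[R]_n) : R :=
  \sum_(i < m) a 0 i * Num.max ((invmx Qy *m (b x)^T) i 0) (l x 0 i).

Definition Theta_fun (R : realType) (N : nat) (n_ : 'I_N -> nat) (m : nat)
  (Q_ : forall nu : 'I_N, 'M[R]_(n_ nu)) (c_ : forall nu : 'I_N, 'rV[R]_(n_ nu))
  (a : 'rV[R]_m) (Qy : 'M[R]_m)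
  (b l : 'rV[R]_(\sum_(nu < N) n_ nu) -> 'rV[R]_m)
  (x : 'rV[R]_(\sum_(nu < N) n_ nu)) : R :=
  \sum_(nu < N) (2^-1 * (block x nu *m Q_ nu *m (block x nu)^T) 0 0
                 + (c_ nu *m (block x nu)^T) 0 0)
  + phi_fun a Qy b l x.

From HB Require Import structures.
From mathcomp Require Import all_boot all_order all_algebra.
From mathcomp Require Import all_classical all_reals all_analysis.
From mathcomp Require Import lra.
Import Order.TTheory GRing.Theory Num.Theory.
Import numFieldNormedType.Exports.
Local Open Scope ring_scope.
Local Open Scope classical_set_scope.

(* Theta(x) = q(x)/2 + L(x) + phi(x), where q(x) = sum_nu x_nu^T Q_nu x_nu and
   L(x) = sum_nu c_nu^T x_nu are continuous and positively homogeneous of degrees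
   2 and 1.  Such a function is bounded below by its minimum on the compact unit
   sphere times |x|^p; positive definiteness makes that minimum positive for q.
   Hence Theta(x) >= (lam/2) |x|^2 + (mu + omega1) |x| + omega2 with lam > 0,
   since phi >= min {0, phi}. *)

Section EuclideanNorm.
Context {R : realType} {k : nat}.
Implicit Types (v : 'rV[R]_k) (t : R).

Lemma enorm_sqr v : enorm v ^+ 2 = \sum_(i < k) v 0 i ^+ 2.
Proof. by rewrite /enorm sqr_sqrtr // sumr_ge0 // => i _; rewrite sqr_ge0. Qed.

Lemma enorm_ge0 v : 0 <= enorm v.
Proof. exact: sqrtr_ge0. Qed.

Lemma enorm_eq0 v : (enorm v == 0) = (v == 0).
Proof.
apply/idP/eqP => [|->]; last by rewrite /enorm big1 ?sqrtr0 // => i _; rewrite mxE expr0n.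
rewrite -sqrf_eq0 enorm_sqr => /eqP /psumr_eq0P v0.
apply/matrixP => i j; rewrite (ord1 i) mxE; apply/eqP.
by rewrite -sqrf_eq0 v0 // => l _; rewrite sqr_ge0.
Qed.

Lemma enormZ t v : enorm (t *: v) = `|t| * enorm v.
Proof.
rewrite /enorm -sqrtr_sqr -sqrtrM ?sqr_ge0 // mulr_sumr.
by congr Num.sqrt; apply: eq_bigr => i _; rewrite mxE exprMn.
Qed.

Lemma normr_coord_le_enorm v i : `|v 0 i| <= enorm v.
Proof.
rewrite -sqrtr_sqr ler_sqrt; last by rewrite sumr_ge0 // => j _; rewrite sqr_ge0.
by rewrite (bigD1 i) //= lerDl sumr_ge0 // => j _; rewrite sqr_ge0.
Qed.

Lemma continuous_enorm : continuous (@enorm R k).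
Proof.
move=> v; apply: continuous_comp; last exact: sqrt_continuous.
apply: (@continuous_big _ _ +%R 0 _ add_continuous) => i _ w.
have coord_i : {for w, continuous (fun u : 'rV[R]_k => u 0 i)}.
  exact: (@coord_continuous R 1 k 0 i).
exact: (continuousM coord_i coord_i).
Qed.

Lemma compact_unit_sphere : compact [set v : 'rV[R]_k | enorm v = 1].
Proof.
apply: bounded_closed_compact.
  exists 1; split; first exact: num_real.
  move=> M M1 v /= v1; rewrite [leLHS]/Num.Def.normr /= mx_normrE.
  apply/bigmax_leP; split => [|[i j] _ /=]; first by rewrite ltW // (lt_trans _ M1).
  by rewrite (ord1 i) (le_trans (normr_coord_le_enorm _ _)) // v1 ltW.
apply: (preimage_closed (f := @enorm R k) (D := [set x | x = 1])); last exact: closed_eq.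
by move=> v _; apply: continuous_enorm.
Qed.

End EuclideanNorm.

Section PositivelyHomogeneous.
Context {R : realType} {k p : nat} {f : 'rV[R]_k -> R}.
Hypotheses (p_gt0 : (0 < p)%N) (f_cont : continuous f)
  (fZ : forall t v, 0 < t -> f (t *: v) = t ^+ p * f v).

Lemma homogeneous_at0 : f 0 = 0.
Proof.
have /eqP := fZ 2 0 (ltr0Sn R 1); rewrite scaler0 -subr_eq0 -{1}[f 0]mul1r -mulrBl.
rewrite mulf_eq0 => /orP[|/eqP //]; rewrite subr_eq0 eq_sym gt_eqF //.
by rewrite exprn_egt1 -?lt0n // ltr1n.
Qed.

Lemma homogeneous_lower_bound : exists2 mu : R,
  ((forall v, v != 0 -> 0 < f v) -> 0 < mu) & forall v, mu * enorm v ^+ p <= f v.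
Proof.
suff [mu mu_gt0 mu_le] : exists2 mu : R,
    ((forall v, v != 0 -> 0 < f v) -> 0 < mu) &
    forall v, v != 0 -> mu * enorm v ^+ p <= f v.
  exists mu => // v; have [->|/mu_le //] := eqVneq v 0.
  have /eqP -> : enorm (0 : 'rV[R]_k) == 0 by rewrite enorm_eq0.
  by rewrite homogeneous_at0 expr0n gtn_eqF // mulr0.
have [[v0 v0_neq0]|all0] := pselect (exists v : 'rV[R]_k, v != 0); last first.
  by exists 1 => // v v_neq0; case: all0; exists v.
pose S := [set v : 'rV[R]_k | enorm v = 1].
have S_normalize v : v != 0 -> S ((enorm v)^-1 *: v).
  move=> v_neq0; rewrite /S /= enormZ ger0_norm ?invr_ge0 ?enorm_ge0 //.
  by rewrite mulVf // enorm_eq0.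
have [c /set_mem Sc c_min] := compact_EVT_min (ex_intro _ _ (S_normalize v0 v0_neq0))
  (@compact_unit_sphere R k) (continuous_subspaceT f_cont).
have c_neq0 : c != 0 by rewrite -enorm_eq0 Sc oner_neq0.
exists (f c) => [f_gt0|v v_neq0]; first exact: f_gt0.
have e_gt0 : 0 < enorm v by rewrite lt_def enorm_eq0 v_neq0 enorm_ge0.
rewrite -[in f v](scale1r v) -(mulfV (lt0r_neq0 e_gt0)) -scalerA fZ //.
by rewrite mulrC ler_wpM2l ?exprn_ge0 ?enorm_ge0 //; apply/c_min/mem_set/S_normalize.
Qed.

End PositivelyHomogeneous.

Lemma quadratic_eventually_gt {R : realFieldType} (alpha beta gamma M : R) :
  0 < alpha -> exists r, forall e, r < e -> M < alpha * e ^+ 2 + beta * e + gamma.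
Proof.
move=> alpha_gt0; pose s := `|beta| + `|gamma| + `|M|.
exists (Num.max 1 (s / alpha)) => e; rewrite gt_max ltr_pdivrMr // => /andP[e_gt1 s_lt].
have e_gt0 : 0 < e := lt_trans ltr01 e_gt1.
have : s * e < alpha * e ^+ 2 by rewrite expr2 mulrA ltr_pM2r // mulrC.
have beta_ge : - beta <= `|beta| by rewrite -normrN ler_norm.
have gamma_ge : - gamma <= `|gamma| by rewrite -normrN ler_norm.
have := ler_norm M; have := normr_ge0 gamma; have := normr_ge0 M.
rewrite /s; nra.
Qed.

Section Forms.
Context {R : realType} {T : topologicalType} {k : nat} {u : T -> 'rV[R]_k}.
Hypothesis u_cont : forall j, continuous (fun x => u x 0 j).

Lemma continuous_quad_form (A : 'M[R]_k) :
  continuous (fun x => (u x *m A *m (u x)^T) 0 0).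
Proof.
have -> : (fun x => (u x *m A *m (u x)^T) 0 0) =
    (fun x => \sum_(j < k) (\sum_(i < k) u x 0 i * A i j) * u x 0 j).
  by apply/funext => x; rewrite !mxE; apply: eq_bigr => j _; rewrite !mxE.
apply: (@continuous_big _ _ +%R 0 _ add_continuous) => j _ x.
apply: continuousM; last exact: u_cont.
apply: (@continuous_big _ _ +%R 0 _ add_continuous) => i _ y.
by apply: continuousM; [exact: u_cont | exact: cst_continuous].
Qed.

Lemma continuous_lin_form (c : 'rV[R]_k) :
  continuous (fun x => (c *m (u x)^T) 0 0).
Proof.
have -> : (fun x => (c *m (u x)^T) 0 0) = (fun x => \sum_(j < k) c 0 j * u x 0 j).
  by apply/funext => x; rewrite !mxE; apply: eq_bigr => j _; rewrite !mxE.
apply: (@continuous_big _ _ +%R 0 _ add_continuous) => j _ x.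
by apply: continuousM; [exact: cst_continuous | exact: u_cont].
Qed.

End Forms.

Section Blocks.
Context {R : realType} {N : nat} {n_ : 'I_N -> nat}.
Local Notation n := (\sum_(nu < N) n_ nu)%N.

Lemma continuous_block_coord nu j : continuous (fun x : 'rV[R]_n => block x nu 0 j).
Proof.
have -> : (fun x : 'rV[R]_n => block x nu 0 j) = (fun x => x 0 (tagnat.Rank nu j)).
  by apply/funext => x; rewrite /block /submxrow mxE.
exact: (@coord_continuous R 1 n 0 (tagnat.Rank nu j)).
Qed.

Lemma blockZ (t : R) (x : 'rV[R]_n) nu : block (t *: x) nu = t *: block x nu.
Proof. by apply/matrixP => i j; rewrite !mxE. Qed.

Lemma block_neq0 (x : 'rV[R]_n) : x != 0 -> exists nu, block x nu != 0.
Proof.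
move=> x_neq0; apply/not_existsP => x0; move/eqP: x_neq0; apply.
by apply/mxrowP => nu; rewrite submxrow0; apply/eqP/negPn/negP; exact: x0.
Qed.

End Blocks.

Section ThetaDecomposition.
Context {R : realType} {N : nat} {n_ : 'I_N -> nat}.
Variables (Q_ : forall nu : 'I_N, 'M[R]_(n_ nu)) (c_ : forall nu : 'I_N, 'rV[R]_(n_ nu)).
Local Notation n := (\sum_(nu < N) n_ nu)%N.
Implicit Types (x : 'rV[R]_n) (t : R).

Definition quad_term x := \sum_(nu < N) (block x nu *m Q_ nu *m (block x nu)^T) 0 0.

Definition lin_term x := \sum_(nu < N) (c_ nu *m (block x nu)^T) 0 0.

Lemma Theta_funE m a Qy (b l : 'rV[R]_n -> 'rV[R]_m) x :
  Theta_fun Q_ c_ a Qy b l x = 2^-1 * quad_term x + lin_term x + phi_fun a Qy b l x.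
Proof. by rewrite /Theta_fun big_split /= -mulr_sumr. Qed.

Lemma continuous_quad_term : continuous quad_term.
Proof.
move=> x; apply: (@continuous_big _ _ +%R 0 _ add_continuous) => nu _ y.
exact: (continuous_quad_form (continuous_block_coord nu)).
Qed.

Lemma continuous_lin_term : continuous lin_term.
Proof.
move=> x; apply: (@continuous_big _ _ +%R 0 _ add_continuous) => nu _ y.
exact: (continuous_lin_form (continuous_block_coord nu)).
Qed.

Lemma quad_termZ t x : quad_term (t *: x) = t ^+ 2 * quad_term x.
Proof.
rewrite /quad_term mulr_sumr; apply: eq_bigr => nu _.
by rewrite blockZ linearZ /= -!scalemxAl -scalemxAr !mxE expr2 mulrA.
Qed.

Lemma lin_termZ t x : lin_term (t *: x) = t * lin_term x.
Proof.
rewrite /lin_term mulr_sumr; apply: eq_bigr => nu _.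
by rewrite blockZ linearZ /= -scalemxAr !mxE.
Qed.

Lemma quad_term_gt0 : (forall nu, posdef_mx (Q_ nu)) -> forall x, x != 0 -> 0 < quad_term x.
Proof.
move=> Q_pd x /block_neq0 [nu x_nu]; rewrite /quad_term (bigD1 nu) //=.
rewrite ltr_pwDl ?Q_pd // sumr_ge0 // => mu _.
have [->|x_mu] := eqVneq (block x mu) 0; first by rewrite !mul0mx mxE.
exact/ltW/Q_pd.
Qed.

End ThetaDecomposition.

Theorem mainTheorem3 (R : realType) (N : nat) (n_ : 'I_N -> nat) (m : nat)
  (Q_ : forall nu : 'I_N, 'M[R]_(n_ nu)) (c_ : forall nu : 'I_N, 'rV[R]_(n_ nu))
  (X_ : forall nu : 'I_N, set 'rV[R]_(n_ nu))
  (a : 'rV[R]_m) (Qy : 'M[R]_m)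
  (b l : 'rV[R]_(\sum_(nu < N) n_ nu) -> 'rV[R]_m) :
  (1 <= N)%N -> (forall nu, (1 <= n_ nu)%N) -> (1 <= m)%N ->
  (forall nu, symmetric_mx (Q_ nu) /\ posdef_mx (Q_ nu)) ->
  (forall nu, X_ nu !=set0 /\ convex_set (X_ nu) /\ closed (X_ nu)) ->
  (forall i, 0 <= a 0 i) ->
  is_diag_mx Qy -> posdef_mx Qy ->
  (forall x, differentiable b x) -> (forall x, differentiable l x) ->
  (exists rho omega1 omega2 : R, 0 <= rho /\
     forall x, (forall nu, X_ nu (block x nu)) -> rho < enorm x ->
       omega1 * enorm x + omega2 <= Num.min 0 (phi_fun a Qy b l x)) ->
  (* coercivity of Theta on X = X_1 x ... x X_N *)
  forall M : R, exists r : R, forall x,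
    (forall nu, X_ nu (block x nu)) -> r < enorm x ->
    M < Theta_fun Q_ c_ a Qy b l x.
Proof.
move=> _ _ _ Q_spd _ _ _ _ _ _ [rho [w1 [w2 [_ phi_ge]]]] M.
have [lam /(_ (quad_term_gt0 Q_ (fun nu => (Q_spd nu).2))) lam_gt0 quad_ge] :=
  homogeneous_lower_bound (isT : (0 < 2)%N) (continuous_quad_term Q_)
    (fun t x _ => quad_termZ Q_ t x).
have [mu _ lin_ge] :=
  homogeneous_lower_bound (isT : (0 < 1)%N) (continuous_lin_term c_)
    (fun t x _ => lin_termZ c_ t x).
have [r r_lt] :=
  quadratic_eventually_gt (lam / 2) (mu + w1) w2 M (divr_gt0 lam_gt0 (ltr0Sn R 1)).
exists (Num.max rho r) => x Xx; rewrite gt_max => /andP[x_rho x_r].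
have := phi_ge x Xx x_rho; rewrite le_min => /andP[_].
have := r_lt _ x_r; have := quad_ge x; have := lin_ge x.
rewrite Theta_funE expr1; lra.
Qed.
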